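(* For every finite binary word $a_1a_2\cdots a_n$ (with $a_i\in\{0,1\}$) one has $$\omega(a_1a_2\cdots a_n)\equiv\sum_{i=1}^n(-1)^ia_i \pmod 3.$$
   Context: The weight $\omega$ is defined on finite binary words (paths in the infinite rooted planar binary tree, $0$ = left edge, $1$ = right edge) as the color of the region immediately to the left of the vertex $z$. The coloring is the proper $3$-coloring by $\mathbb{Z}_3=\{0,1,2\}$ of the complement of the tree (drawn in the upper half plane with a root edge) in which the regions to the left of, to the right of and below the root are colored $0,1,2$. Equivalently, attach to each word $z$ a triple $(L(z),R(z),B(z))$ with - $(L,R,B)(\emptyset)=(0,1,2)$, - $(L,R,B)(z0)=(L(z),B(z),R(z))$, - $(L,R,B)(z1)=(B(z),R(z),L(z))$, and set $\omega(z)=L(z)$. *)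

From mathcomp Require Import all_boot all_algebra.
Set Implicit Arguments. Unset Strict Implicit. Unset Printing Implicit Defensive.
Import GRing.Theory.
Local Open Scope ring_scope.

Definition color := 'Z_3.

(* Finite binary words z = a_1 a_2 ... a_n, represented as the sequence
   [:: a_1; ...; a_n] of booleans (false = 0 = left edge, true = 1 = right edge). *)
Definition word := seq bool.

Definition step (t : color * color * color) (a : bool) : color * color * color :=
  let: (L, R, B) := t in
  if a then (B, R, L) else (L, B, R).

Definition LRB (z : word) : color * color * color :=
  foldl step (0, 1, 2%:R) z.

Definition omega (z : word) : color := (LRB z).1.1.

From mathcomp Require Import all_boot all_algebra.
Import GRing.Theory.
Local Open Scope ring_scope.

(* If a word of length n has alternating sum s, then its triple (L, R, B) is
   (s, s + e, s - e) with e = (-1)^n.  Appending a 0 keeps s and swaps R and B,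
   which matches e changing sign; appending a 1 moves s to s - e and rotates the
   triple, which again has the required shape because -2e = e in Z_3. *)

Definition alt_sum (R : ringType) (a : seq bool) : R :=
  \sum_(i < size a) (-1) ^+ i.+1 * (nth false a i)%:R.

Lemma alt_sum_rcons (R : ringType) (a : seq bool) (x : bool) :
  alt_sum R (rcons a x) = alt_sum R a - (-1) ^+ size a * x%:R.
Proof.
rewrite /alt_sum size_rcons big_ord_recr /= nth_rcons ltnn eqxx exprS mulN1r.
rewrite mulNr; congr (_ - _); apply: eq_bigr => i _.
by rewrite /= nth_rcons ltn_ord.
Qed.

Lemma addrr_Z3 (x : 'Z_3) : x + x = - x.
Proof.
apply/eqP; rewrite -subr_eq0 opprK -mulr2n -mulrSr -mulr_natr.
by rewrite pchar_Zp ?mulr0.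
Qed.

Lemma LRB_rcons (a : word) (x : bool) : LRB (rcons a x) = step (LRB a) x.
Proof. by rewrite /LRB foldl_rcons. Qed.

Lemma LRB_alt_sum (a : word) :
  LRB a = (alt_sum _ a, alt_sum _ a + (-1) ^+ size a, alt_sum _ a - (-1) ^+ size a).
Proof.
elim/last_ind: a => [|a x IHa].
  by rewrite /alt_sum big_ord0 add0r sub0r; congr (_, _, _); apply/val_inj.
rewrite LRB_rcons IHa alt_sum_rcons size_rcons exprS mulN1r opprK.
case: x => /=; last by rewrite mulr0 subr0.
by rewrite mulr1 addrNK -addrA -opprD addrr_Z3 opprK.
Qed.

Theorem proposition2p5 (a : seq bool) :
  omega a = \sum_(i < size a) (-1) ^+ i.+1 * (nth false a i)%:R :> 'Z_3.
Proof. by rewrite /omega LRB_alt_sum. Qed.
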